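(* Let $d\ge2$, $m,c>0$ and $p,p_*\in\mathbb{R}^d$ with $p\neq p_*$. Then \[ \tilde\Lambda\,\Pi_{\hat k^\perp}\,\tilde\Lambda=\frac{\big((p^\mu\cdot p_{*\mu})^2-(mc)^4\big)I_d-(mc)^2\,(p\otimes p+p_*\otimes p_* )+(p^\mu\cdot p_{*\mu})\,(p\otimes p_*+p_*\otimes p)}{(p^\mu\cdot p_{*\mu})^2-(mc)^4}, \] where $p^\mu\cdot p_{*\mu}=p_0p_{0*}-p\cdot p_*$.
   Context: $p_0=\sqrt{(mc)^2+|p|^2}$, $p_{0*}=\sqrt{(mc)^2+|p_*|^2}$, $p^\mu=(p_0,p)$, $p_*^\mu=(p_{0*},p_* )$. Define $s=(p_0+p_{0*})^2-|p+p_*|^2$, $v=\frac{p+p_*}{p_0+p_{0*}}$, $\rho=\frac{p_0+p_{0*}}{\sqrt s}$, the symmetric matrix $\tilde\Lambda=I_d+(\rho-1)\frac{v\otimes v}{|v|^2}$ ($=I_d$ if $v=0$), and the Lorentz transformation $\Lambda=\begin{pmatrix}\rho&-\rho v^T\\-\rho v&\tilde\Lambda\end{pmatrix}$. Let $\tilde p,\tilde p_*$ be the spatial parts of $\Lambda p^\mu$, $\Lambda p_*^\mu$, $\hat k=\frac{\tilde p-\tilde p_*}{|\tilde p-\tilde p_*|}$, and $\Pi_{\hat k^\perp}=I_d-\hat k\otimes\hat k$. *)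

From mathcomp Require Import all_boot all_order all_algebra.
Set Implicit Arguments. Unset Strict Implicit. Unset Printing Implicit Defensive.
Import Order.TTheory GRing.Theory Num.Theory.
Local Open Scope ring_scope.

Section Lorentz.
Variables (R : rcfType) (d : nat).

Definition dotv (x y : 'cV[R]_d) : R := \sum_(i < d) x i 0 * y i 0.
Definition sqnorm (x : 'cV[R]_d) : R := dotv x x.
Definition normv (x : 'cV[R]_d) : R := Num.sqrt (sqnorm x).

Definition outer (x y : 'cV[R]_d) : 'M[R]_d := x *m y^T.

Definition p0 (m c : R) (p : 'cV[R]_d) : R := Num.sqrt ((m * c) ^+ 2 + sqnorm p).

Definition minkdot (m c : R) (p q : 'cV[R]_d) : R := p0 m c p * p0 m c q - dotv p q.

Definition s_inv (m c : R) (p q : 'cV[R]_d) : R :=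
  (p0 m c p + p0 m c q) ^+ 2 - sqnorm (p + q).

Definition vel (m c : R) (p q : 'cV[R]_d) : 'cV[R]_d :=
  (p0 m c p + p0 m c q)^-1 *: (p + q).

Definition rho (m c : R) (p q : 'cV[R]_d) : R :=
  (p0 m c p + p0 m c q) / Num.sqrt (s_inv m c p q).

Definition LambdaT (m c : R) (p q : 'cV[R]_d) : 'M[R]_d :=
  let v := vel m c p q in
  if v == 0 then 1%:M
  else 1%:M + ((rho m c p q - 1) / sqnorm v) *: outer v v.

(* spatial part of Lambda applied to the four-vector (x0, x):
   -rho v x0 + \tilde\Lambda x *)
Definition boost_spatial (m c : R) (p q : 'cV[R]_d) (x0 : R) (x : 'cV[R]_d)
  : 'cV[R]_d :=
  - (rho m c p q * x0) *: vel m c p q + LambdaT m c p q *m x.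

Definition ptil (m c : R) (p q : 'cV[R]_d) : 'cV[R]_d :=
  boost_spatial m c p q (p0 m c p) p.
Definition pstil (m c : R) (p q : 'cV[R]_d) : 'cV[R]_d :=
  boost_spatial m c p q (p0 m c q) q.

Definition khat (m c : R) (p q : 'cV[R]_d) : 'cV[R]_d :=
  (normv (ptil m c p q - pstil m c p q))^-1 *: (ptil m c p q - pstil m c p q).

Definition Pi_perp (m c : R) (p q : 'cV[R]_d) : 'M[R]_d :=
  1%:M - outer (khat m c p q) (khat m c p q).

End Lorentz.

From mathcomp Require Import all_boot all_order all_algebra.
From mathcomp Require Import ring lra.
Set Implicit Arguments. Unset Strict Implicit. Unset Printing Implicit Defensive.
Import Order.TTheory GRing.Theory Num.Theory.
Local Open Scope ring_scope.

(* Write q for p_*, S = p + q, P = p_0 + q_0, g = p^mu q_mu and mu2 = (mc)^2, so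
   that s = P^2 - |S|^2 = 2 (mu2 + g) and v = S / P.  The spatial block L of a
   boost whose velocity v and factor rho satisfy rho^2 (1 - |v|^2) = 1 is
   symmetric, has v as eigenvector with eigenvalue rho, and L^2 = I + rho^2 v ⊗ v.
   Hence, when v . x = x_0, i.e. the boost kills the time component of (x_0, x),
   the boosted spatial part w = - rho x_0 v + L x satisfies L w = x and
   |w|^2 = |x|^2 - x_0^2.  For (x_0, x) = (p_0 - q_0, p - q) this gives
   L (p~ - q~) = p - q and |p~ - q~|^2 = 2 (g - mu2), so that
     L Pi L = L^2 - (p - q) ⊗ (p - q) / |p~ - q~|^2
            = I + S ⊗ S / (2 (mu2 + g)) - (p - q) ⊗ (p - q) / (2 (g - mu2)),
   which is the claimed matrix after polarization.  Both denominators are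
   positive because g > mu2 for p <> q, by Cauchy-Schwarz. *)

Section Euclidean.
Variables (R : rcfType) (d : nat).
Implicit Types (x y z : 'cV[R]_d) (a : R).

Lemma dotvC x y : dotv x y = dotv y x.
Proof. by apply: eq_bigr => i _; rewrite mulrC. Qed.

Lemma dotvDl x y z : dotv (x + y) z = dotv x z + dotv y z.
Proof. by rewrite /dotv -big_split; apply: eq_bigr => i _; rewrite mxE mulrDl. Qed.

Lemma dotvZl a x y : dotv (a *: x) y = a * dotv x y.
Proof. by rewrite /dotv mulr_sumr; apply: eq_bigr => i _; rewrite mxE mulrA. Qed.

Lemma dotvNl x y : dotv (- x) y = - dotv x y.
Proof. by rewrite -scaleN1r dotvZl mulN1r. Qed.

Lemma dotvDr x y z : dotv x (y + z) = dotv x y + dotv x z.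
Proof. by rewrite dotvC dotvDl !(dotvC x). Qed.

Lemma dotvZr a x y : dotv x (a *: y) = a * dotv x y.
Proof. by rewrite dotvC dotvZl dotvC. Qed.

Lemma dotvNr x y : dotv x (- y) = - dotv x y.
Proof. by rewrite dotvC dotvNl dotvC. Qed.

Lemma dotv0r x : dotv x 0 = 0.
Proof. by rewrite -(scale0r 0) dotvZr mul0r. Qed.

Lemma trmx_mul_dotv x y : x^T *m y = (dotv x y)%:M.
Proof.
apply/matrixP => i j; rewrite !ord1 !mxE eqxx mulr1n.
by apply: eq_bigr => k _; rewrite !mxE.
Qed.

Lemma dotv_mulmxl (A : 'M[R]_d) x y : dotv (A *m x) y = dotv x (A^T *m y).
Proof.
have /matrixP/(_ 0 0) := trmx_mul_dotv (A *m x) y.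
by rewrite trmx_mul -mulmxA trmx_mul_dotv !mxE !eqxx !mulr1n.
Qed.

Lemma sqnorm_ge0 x : 0 <= sqnorm x.
Proof. by apply: sumr_ge0 => i _; rewrite -expr2 sqr_ge0. Qed.

Lemma sqnorm_eq0 x : (sqnorm x == 0) = (x == 0).
Proof.
apply/idP/eqP => [/eqP x0 | ->]; last by rewrite /sqnorm dotv0r.
have sq_ge0 (k : 'I_d) : true -> 0 <= x k 0 * x k 0 by rewrite -expr2 sqr_ge0.
apply/matrixP => i j; rewrite !ord1 mxE; apply/eqP.
have /eqP := (psumr_eq0P sq_ge0 x0) i isT.
by rewrite mulf_eq0 orbb.
Qed.

Lemma sqnorm_gt0 x : x != 0 -> 0 < sqnorm x.
Proof. by rewrite lt_def sqnorm_ge0 sqnorm_eq0 andbT. Qed.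

Lemma sqnormD x y : sqnorm (x + y) = sqnorm x + 2 * dotv x y + sqnorm y.
Proof. by rewrite /sqnorm !(dotvDl, dotvDr) (dotvC y x); ring. Qed.

Lemma sqnormB x y : sqnorm (x - y) = sqnorm x - 2 * dotv x y + sqnorm y.
Proof. by rewrite sqnormD /sqnorm !(dotvNl, dotvNr) opprK; ring. Qed.

Lemma sqnormZ a x : sqnorm (a *: x) = a ^+ 2 * sqnorm x.
Proof. by rewrite /sqnorm dotvZl dotvZr mulrA -expr2. Qed.

Lemma cauchy_schwarz x y : dotv x y ^+ 2 <= sqnorm x * sqnorm y.
Proof.
have [y0 | y_neq0] := eqVneq y 0.
  by rewrite y0 dotv0r /sqnorm dotv0r expr0n mulr0.
have := sqnorm_ge0 (sqnorm y *: x - dotv x y *: y).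
rewrite sqnormB /sqnorm !(dotvZl, dotvZr) -/(sqnorm x) -/(sqnorm y).
have := sqnorm_gt0 y_neq0; set b := sqnorm y; set t := dotv x y => b_gt0 h.
by rewrite -subr_ge0 -(pmulr_rge0 _ b_gt0); lra.
Qed.

Lemma outerZ a b x y : outer (a *: x) (b *: y) = (a * b) *: outer x y.
Proof. by rewrite /outer linearZ /= -scalemxAl -scalemxAr scalerA. Qed.

Lemma outerDl x y z : outer (x + y) z = outer x z + outer y z.
Proof. by rewrite /outer mulmxDl. Qed.

Lemma outerDr x y z : outer x (y + z) = outer x y + outer x z.
Proof. by rewrite /outer linearD mulmxDr. Qed.

Lemma outerNl x y : outer (- x) y = - outer x y.
Proof. by rewrite /outer mulNmx. Qed.

Lemma outerNr x y : outer x (- y) = - outer x y.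
Proof. by rewrite /outer linearN mulmxN. Qed.

Lemma outer_mulmx x y z : outer x y *m z = dotv y z *: x.
Proof. by rewrite /outer -mulmxA trmx_mul_dotv mul_mx_scalar. Qed.

Lemma outer_mul x y z w : outer x y *m outer z w = dotv y z *: outer x w.
Proof. by rewrite {2}/outer mulmxA outer_mulmx -scalemxAl. Qed.

Lemma mulmx_outer (A B : 'M[R]_d) x y :
  A *m outer x y *m B = outer (A *m x) (B^T *m y).
Proof. by rewrite /outer trmx_mul trmxK !mulmxA. Qed.

Lemma outer_normalize x :
  outer ((normv x)^-1 *: x) ((normv x)^-1 *: x) = (sqnorm x)^-1 *: outer x x.
Proof. by rewrite outerZ -invfM -expr2 sqr_sqrtr // sqnorm_ge0. Qed.

Lemma outer_polarization (a g : R) x y :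
  a + g != 0 -> g - a != 0 ->
  1%:M + (2 * (a + g))^-1 *: outer (x + y) (x + y)
       - (2 * (g - a))^-1 *: outer (x - y) (x - y)
  = (g ^+ 2 - a ^+ 2)^-1 *:
      ((g ^+ 2 - a ^+ 2) *: 1%:M - a *: (outer x x + outer y y)
       + g *: (outer x y + outer y x)).
Proof.
move=> ga_neq0 gsa_neq0.
rewrite !(outerDl, outerDr, outerNl, outerNr); apply/matrixP => i j; rewrite !mxE.
by field; rewrite subr_sqr (addrC g a) mulf_neq0 // ga_neq0 gsa_neq0.
Qed.

End Euclidean.

Section Boost.
Variables (R : rcfType) (d : nat) (r : R) (v : 'cV[R]_d).

Definition boost_mx : 'M[R]_d :=
  if v == 0 then 1%:M else 1%:M + ((r - 1) / sqnorm v) *: outer v v.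

Definition boost_vec (x0 : R) (x : 'cV[R]_d) : 'cV[R]_d :=
  - (r * x0) *: v + boost_mx *m x.

Lemma trmx_boost_mx : boost_mx^T = boost_mx.
Proof.
rewrite /boost_mx; case: ifP => _; first exact: trmx1.
by rewrite linearD /= linearZ /= trmx1 /outer trmx_mul trmxK.
Qed.

(* Also valid for [v = 0]: the junk quotient [(r - 1) / 0] then multiplies [v]. *)
Lemma boost_mx_mulmx x : boost_mx *m x = x + ((r - 1) / sqnorm v * dotv v x) *: v.
Proof.
rewrite /boost_mx; case: eqP => [-> | _]; first by rewrite mul1mx scaler0 addr0.
by rewrite mulmxDl mul1mx -scalemxAl outer_mulmx scalerA.
Qed.

Lemma boost_mx_vel : boost_mx *m v = r *: v.
Proof.
rewrite boost_mx_mulmx -/(sqnorm v).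
have [-> | v_neq0] := eqVneq v 0; first by rewrite !scaler0 addr0.
by rewrite mulfVK ?sqnorm_eq0 // -{1}[v]scale1r -scalerDl addrC subrK.
Qed.

Lemma boost_vecB x0 x y0 y :
  boost_vec x0 x - boost_vec y0 y = boost_vec (x0 - y0) (x - y).
Proof. by rewrite /boost_vec mulmxBr; apply/matrixP => i j; rewrite !mxE; ring. Qed.

Hypothesis r_lorentz : r ^+ 2 * (1 - sqnorm v) = 1.

Lemma boost_mx_sqr : boost_mx *m boost_mx = 1%:M + r ^+ 2 *: outer v v.
Proof.
rewrite /boost_mx; case: eqP => [-> | /eqP v_neq0].
  by rewrite mulmx1 /outer mul0mx scaler0 addr0.
have n_neq0 : sqnorm v != 0 by rewrite sqnorm_eq0.
set k := (r - 1) / sqnorm v; have kn : k * sqnorm v = r - 1 by rewrite divfK.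
rewrite mulmxDr mulmx1 mulmxDl mul1mx -scalemxAl -scalemxAr outer_mul !scalerA.
rewrite -addrA -!scalerDl; congr (_ + _ *: _); apply: (mulIf n_neq0).
have -> : (k + (k + k * k * sqnorm v)) * sqnorm v
          = (k * sqnorm v) *+ 2 + (k * sqnorm v) ^+ 2 by ring.
have r2n : r ^+ 2 * sqnorm v = r ^+ 2 - 1 by rewrite -r_lorentz; ring.
by rewrite kn r2n; ring.
Qed.

Lemma boost_mx_sqr_mulmx x :
  boost_mx *m (boost_mx *m x) = x + (r ^+ 2 * dotv v x) *: v.
Proof. by rewrite mulmxA boost_mx_sqr mulmxDl mul1mx -scalemxAl outer_mulmx scalerA. Qed.

Variables (x0 : R) (x : 'cV[R]_d).
(* The boost maps the four-vector (x0, x) to one with zero time component. *)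
Hypothesis time_x : dotv v x = x0.

Lemma boost_mx_boost_vec : boost_mx *m boost_vec x0 x = x.
Proof.
rewrite mulmxDr boost_mx_sqr_mulmx -scalemxAr boost_mx_vel time_x scalerA.
by rewrite addrCA -scalerDl mulNr mulrAC -expr2 addNr scale0r addr0.
Qed.

Lemma sqnorm_boost_vec : sqnorm (boost_vec x0 x) = sqnorm x - x0 ^+ 2.
Proof.
have vBx : dotv v (boost_mx *m x) = r * x0.
  by rewrite dotvC dotv_mulmxl trmx_boost_mx boost_mx_vel dotvZr dotvC time_x.
have BxBx : sqnorm (boost_mx *m x) = sqnorm x + r ^+ 2 * x0 ^+ 2.
  rewrite /sqnorm dotv_mulmxl trmx_boost_mx boost_mx_sqr_mulmx.
  by rewrite dotvDr dotvZr (dotvC x v) time_x -/(sqnorm x); ring.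
rewrite /boost_vec sqnormD BxBx /sqnorm !(dotvNl, dotvNr, dotvZl, dotvZr) vBx.
transitivity (sqnorm x - r ^+ 2 * (1 - sqnorm v) * x0 ^+ 2).
  by rewrite /sqnorm; ring.
by rewrite r_lorentz mul1r.
Qed.

End Boost.

Section Collision.
Variables (R : rcfType) (d : nat) (m c : R) (p q : 'cV[R]_d).

Implicit Type x : 'cV[R]_d.
Local Notation P := (p0 m c p + p0 m c q).
Local Notation w := (ptil m c p q - pstil m c p q).

Lemma p0_sqr x : p0 m c x ^+ 2 = (m * c) ^+ 2 + sqnorm x.
Proof. by rewrite sqr_sqrtr // addr_ge0 ?sqr_ge0 ?sqnorm_ge0. Qed.

Lemma s_invE : s_inv m c p q = 2 * ((m * c) ^+ 2 + minkdot m c p q).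
Proof. by rewrite /s_inv sqrrD !p0_sqr sqnormD /minkdot; ring. Qed.

Lemma sqnormB_p0 :
  sqnorm (p - q) - (p0 m c p - p0 m c q) ^+ 2
  = 2 * (minkdot m c p q - (m * c) ^+ 2).
Proof. by rewrite sqrrB !p0_sqr sqnormB /minkdot; ring. Qed.

Lemma LambdaTE : LambdaT m c p q = boost_mx (rho m c p q) (vel m c p q).
Proof. by []. Qed.

Lemma ptil_sub :
  w = boost_vec (rho m c p q) (vel m c p q) (p0 m c p - p0 m c q) (p - q).
Proof. exact: boost_vecB. Qed.

Lemma Pi_perpE : Pi_perp m c p q = 1%:M - (sqnorm w)^-1 *: outer w w.
Proof. by rewrite /Pi_perp /khat outer_normalize. Qed.

Hypotheses (m_gt0 : 0 < m) (c_gt0 : 0 < c).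

Lemma p0_gt0 x : 0 < p0 m c x.
Proof. by rewrite sqrtr_gt0 ltr_wpDr ?sqnorm_ge0 // exprn_gt0 // mulr_gt0. Qed.

Lemma p0_sum_gt0 : 0 < P.
Proof. by rewrite addr_gt0 ?p0_gt0. Qed.

Lemma dotv_vel : dotv (vel m c p q) (p - q) = p0 m c p - p0 m c q.
Proof.
have P_neq0 : P != 0 := lt0r_neq0 p0_sum_gt0.
have sqnormE x : sqnorm x = p0 m c x ^+ 2 - (m * c) ^+ 2 by rewrite p0_sqr; ring.
rewrite dotvZl dotvDl !dotvDr !dotvNr (dotvC q p) -!/(sqnorm _) !sqnormE.
by apply: (mulfI P_neq0); rewrite mulrA mulfV // mul1r; ring.
Qed.

Hypothesis p_neq_q : p != q.

Lemma minkdot_gt : (m * c) ^+ 2 < minkdot m c p q.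
Proof.
(* (p_0 q_0)^2 - ((mc)^2 + p.q)^2 = (mc)^2 |p - q|^2 + (|p|^2 |q|^2 - (p.q)^2) *)
have mc2_gt0 : 0 < (m * c) ^+ 2 by rewrite exprn_gt0 // mulr_gt0.
have pq_gt0 : 0 < sqnorm (p - q) by rewrite sqnorm_gt0 // subr_eq0.
have u_gt0 : 0 < p0 m c p * p0 m c q by rewrite mulr_gt0 ?p0_gt0.
have sqr_lt : ((m * c) ^+ 2 + dotv p q) ^+ 2 < (p0 m c p * p0 m c q) ^+ 2.
  rewrite (exprMn _ (p0 m c p)) !p0_sqr; move: pq_gt0; rewrite sqnormB.
  have := cauchy_schwarz p q; nra.
rewrite /minkdot; nra.
Qed.

Lemma s_inv_gt0 : 0 < s_inv m c p q.
Proof. rewrite s_invE; have := minkdot_gt; have := sqr_ge0 (m * c); lra. Qed.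

Lemma rho_sqr : rho m c p q ^+ 2 = P ^+ 2 / s_inv m c p q.
Proof. by rewrite expr_div_n sqr_sqrtr // ltW // s_inv_gt0. Qed.

Lemma rho_vel : rho m c p q ^+ 2 * (1 - sqnorm (vel m c p q)) = 1.
Proof.
have sE : sqnorm (p + q) = P ^+ 2 - s_inv m c p q by rewrite /s_inv; ring.
rewrite rho_sqr sqnormZ sE; field.
by rewrite (gt_eqF p0_sum_gt0) (gt_eqF s_inv_gt0).
Qed.

Lemma rho_outer_vel :
  rho m c p q ^+ 2 *: outer (vel m c p q) (vel m c p q)
  = (s_inv m c p q)^-1 *: outer (p + q) (p + q).
Proof.
rewrite outerZ scalerA rho_sqr; congr (_ *: _); field.
by rewrite (gt_eqF p0_sum_gt0) (gt_eqF s_inv_gt0).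
Qed.

End Collision.

Theorem propositionA4 (R : rcfType) (d : nat) (m c : R) (p q : 'cV[R]_d) :
  (2 <= d)%N -> 0 < m -> 0 < c -> p != q ->
  let L := LambdaT m c p q in
  let g := minkdot m c p q in
  L *m Pi_perp m c p q *m L =
    (g ^+ 2 - (m * c) ^+ 4)^-1 *:
      ((g ^+ 2 - (m * c) ^+ 4) *: 1%:M
       - (m * c) ^+ 2 *: (outer p p + outer q q)
       + g *: (outer p q + outer q p)).
Proof.
move=> _ m_gt0 c_gt0 p_neq_q L g.
have r_lorentz := rho_vel m_gt0 c_gt0 p_neq_q.
have time_w := dotv_vel p q m_gt0 c_gt0.
rewrite Pi_perpE mulmxBr mulmx1 mulmxBl -scalemxAr -scalemxAl mulmx_outer.
rewrite /L LambdaTE trmx_boost_mx boost_mx_sqr // ptil_sub boost_mx_boost_vec //.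
rewrite sqnorm_boost_vec // sqnormB_p0 rho_outer_vel // s_invE -/g.
have -> : (m * c) ^+ 4 = ((m * c) ^+ 2) ^+ 2 by rewrite -exprM.
have g_gt : (m * c) ^+ 2 < g := minkdot_gt m_gt0 c_gt0 p_neq_q.
have mc2_ge0 := sqr_ge0 (m * c).
by apply: outer_polarization; apply: lt0r_neq0; lra.
Qed.
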